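(* Let $G$ be an étale groupoid with base $T=G^{(0)}$, $T_0$ a totally disconnected $G$-space whose structure map $g\colon T_0\to T$ is proper with fibers of at most $N$ points, $T_n$ the $(n+1)$-fold fiber product of $T_0$ over $T$, and $g_n\colon T_n\to T$ the induced map. Let $F$ be a $G$-sheaf, $F^n=(g_n)_*(g_n^*F)$, and $F^{n,a}\subset F^n$ the alternating subsheaf. Then $F^{n,a}$ is c-soft.
   Context: All spaces are second countable locally compact Hausdorff. $T_n=\{(x_0,\dots,x_n)\in T_0^{n+1}:g(x_0)=\dots=g(x_n)\}$, $g_n(x_0,\dots,x_n)=g(x_0)$; $S_{n+1}$ acts on $T_n$ by permuting coordinates, hence on $F^n$ (using $\Gamma(U,F^n)=\Gamma(g_n^{-1}(U),g_n^*F)$). $T_n^f\subset T_n$ is the open set of points with pairwise distinct coordinates. For $U\subset T$ open, $\Gamma(U,F^{n,a})=\{x\in\Gamma(U,F^n): \operatorname{supp}x\subset T_n^f,\ s x=(-1)^{|s|}x\ \forall s\in S_{n+1}\}$. A sheaf is c-soft if every section over a compact subset extends to a global section. *)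

From mathcomp Require Import all_boot all_order all_algebra all_fingroup.
From mathcomp Require Import all_classical all_reals all_analysis.

Set Implicit Arguments.
Unset Strict Implicit.
Unset Printing Implicit Defensive.
Local Open Scope classical_set_scope.

Definition slch (X : topologicalType) : Prop :=
  [/\ hausdorff_space X, locally_compact [set: X] & @second_countable X].

(* local homeomorphism: continuous, and every point has an open
   neighbourhood on which f is injective and open (hence a homeomorphism
   onto an open subset) *)
Definition local_homeo (X Y : topologicalType) (f : X -> Y) : Prop :=
  continuous f /\
  forall a, exists U : set X,
    [/\ open U, U a,
        (forall x y, U x -> U y -> f x = f y -> x = y) &
        (forall V, open V -> V `<=` U -> open (f @` V))].

Definition proper_map (X Y : topologicalType) (f : X -> Y) : Prop :=
  continuous f /\ forall K : set Y, compact K -> compact (f @^-1` K).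

(* Etale groupoid with arrow space Gm and unit space T (identified with
   G^(0) through the unit map gu). gm a b is the product "a b", defined
   when gs a = gr b. *)
Record etale_groupoid (T Gm : topologicalType) := EtaleGroupoid {
  gs : Gm -> T; gr : Gm -> T; gu : T -> Gm; gi : Gm -> Gm;
  gm : Gm -> Gm -> Gm;
  gs_cont : continuous gs; gu_cont : continuous gu; gi_cont : continuous gi;
  gm_cont : {within [set ab : Gm * Gm | gs ab.1 = gr ab.2],
             continuous (fun ab => gm ab.1 ab.2)};
  gr_etale : local_homeo gr;
  gs_gu : forall t, gs (gu t) = t;
  gr_gu : forall t, gr (gu t) = t;
  gs_gm : forall a b, gs a = gr b -> gs (gm a b) = gs b;
  gr_gm : forall a b, gs a = gr b -> gr (gm a b) = gr a;
  gm_assoc : forall a b c, gs a = gr b -> gs b = gr c ->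
                gm (gm a b) c = gm a (gm b c);
  gm_unitl : forall a, gm (gu (gr a)) a = a;
  gm_unitr : forall a, gm a (gu (gs a)) = a;
  gs_gi : forall a, gs (gi a) = gr a;
  gr_gi : forall a, gr (gi a) = gs a;
  gm_invr : forall a, gm a (gi a) = gu (gr a);
  gm_invl : forall a, gm (gi a) a = gu (gs a)
}.

Definition is_Gspace (T Gm X : topologicalType) (G : etale_groupoid T Gm)
    (g : X -> T) (act : Gm -> X -> X) : Prop :=
  [/\ continuous g,
      {within [set ax : Gm * X | gs G ax.1 = g ax.2],
        continuous (fun ax => act ax.1 ax.2)},
      (forall a x, gs G a = g x -> g (act a x) = gr G a),
      (forall x, act (gu G (g x)) x = x) &
      (forall a b x, gs G a = gr G b -> gs G b = g x ->
         act (gm G a b) x = act a (act b x))].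

(* A sheaf of abelian groups on T, given by its etale space E with
   projection p (a local homeomorphism) and continuous fibrewise
   abelian group operations. *)
Record ab_sheaf (T : topologicalType) (E : topologicalType) := AbSheaf {
  sp : E -> T;
  sz : T -> E;
  sadd : E -> E -> E;
  sopp : E -> E;
  sp_etale : local_homeo sp;
  sz_cont : continuous sz;
  sadd_cont : {within [set ef : E * E | sp ef.1 = sp ef.2],
               continuous (fun ef => sadd ef.1 ef.2)};
  sopp_cont : continuous sopp;
  sp_sz : forall t, sp (sz t) = t;
  sp_sadd : forall e f, sp e = sp f -> sp (sadd e f) = sp e;
  sp_sopp : forall e, sp (sopp e) = sp e;
  saddA : forall e f h, sp e = sp f -> sp f = sp h ->
            sadd e (sadd f h) = sadd (sadd e f) h;
  saddC : forall e f, sp e = sp f -> sadd e f = sadd f e;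
  sadd0 : forall e, sadd e (sz (sp e)) = e;
  saddN : forall e, sadd e (sopp e) = sz (sp e)
}.

Definition is_Gsheaf (T Gm E : topologicalType) (G : etale_groupoid T Gm)
    (F : ab_sheaf T E) (actE : Gm -> E -> E) : Prop :=
  is_Gspace G (sp F) actE /\
  (forall a e f, gs G a = sp F e -> sp F e = sp F f ->
     actE a (sadd F e f) = sadd F (actE a e) (actE a f)).

Definition fibres_atmost (X T : Type) (g : X -> T) (N : nat) : Prop :=
  forall (t : T) (xs : 'I_N.+1 -> X), (forall i, g (xs i) = t) ->
    exists i j, i != j /\ xs i = xs j.

Section Fn.
Variables (T T0 E : topologicalType) (g : T0 -> T) (F : ab_sheaf T E) (n : nat).

Definition Pn : topologicalType := prod_topology (fun _ : 'I_n.+1 => T0).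

Definition Tn : set Pn := [set x | forall i j, g (x i) = g (x j)].

Definition Tnf : set Pn := [set x | Tn x /\ injective x].

Definition gn (x : Pn) : T := g (x ord0).

Definition Wn (U : set T) : set Pn := [set x | Tn x /\ U (gn x)].

(* Gamma(U, F^n) = Gamma(g_n^{-1}(U), g_n^* F): continuous maps
   s : g_n^{-1}(U) -> E with p o s = g_n (values off g_n^{-1}(U) are
   irrelevant) *)
Definition sec_Fn (U : set T) (s : Pn -> E) : Prop :=
  (forall x, Wn U x -> sp F (s x) = gn x) /\ {within Wn U, continuous s}.

Definition sec_Fna (U : set T) (s : Pn -> E) : Prop :=
  [/\ sec_Fn U s,
      (forall x, Wn U x -> s x <> sz F (gn x) -> Tnf x) &
      (forall (pi : 'S_n.+1) x, Wn U x ->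
         s (fun i => x (pi i)) = if odd_perm pi then sopp F (s x) else s x)].

Definition germ_eq (U1 U2 : set T) (t : T) (s1 s2 : Pn -> E) : Prop :=
  exists V : set T, [/\ open V, V t, V `<=` U1 `&` U2 &
                        forall x, Wn V x -> s1 x = s2 x].

(* A section of F^{n,a} over a compact K: a family of germs along K, given
   by local sections s t over open neighbourhoods U t of the points t of K
   whose germs agree at every common point of K. *)
Definition sec_Fna_on (K : set T) (U : T -> set T) (s : T -> Pn -> E) : Prop :=
  (forall t, K t -> [/\ open (U t), U t t & sec_Fna (U t) (s t)]) /\
  (forall t1 t2 t, K t1 -> K t2 -> K t -> U t1 t -> U t2 t ->
     germ_eq (U t1) (U t2) t (s t1) (s t2)).

(* c-softness of F^{n,a}: every section over a compact set is the
   restriction of a global section *)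
Definition Fna_csoft : Prop :=
  forall (K : set T) (U : T -> set T) (s : T -> Pn -> E),
    compact K -> sec_Fna_on K U s ->
    exists s0 : Pn -> E, sec_Fna setT s0 /\
      forall t1 t, K t1 -> K t -> U t1 t -> germ_eq setT (U t1) t s0 (s t1).

End Fn.

From mathcomp Require Import all_boot all_order all_algebra all_fingroup.
From mathcomp Require Import all_classical all_reals all_analysis.

(* A locally compact Hausdorff totally disconnected space has a basis of
   clopen sets, so the coordinates of each point x of the compact set
   T_n ∩ g_n^{-1}(K) lie in a clopen C_x ⊆ T0 with g(C_x) ⊆ U_{g_n x}.  The
   cubes C_x^{n+1} ⊆ T0^{n+1} are clopen and stable under permutation of the
   coordinates, and finitely many of them cover T_n ∩ g_n^{-1}(K).  The global
   section takes at y the value of s_{g_n x}(y) for the first cube containing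
   y, and 0 outside all of them: it is continuous because the cubes are
   clopen, alternating and supported in T_n^f because the cubes are
   symmetric, and it has the prescribed germs along K because g_n is proper. *)

Set Implicit Arguments.
Unset Strict Implicit.
Unset Printing Implicit Defensive.
Local Open Scope classical_set_scope.

Lemma filter_forall_seq (X : Type) (I : eqType) (F : set_system X)
    (l : seq I) (P : I -> set X) :
  Filter F -> (forall i, i \in l -> F (P i)) ->
  F [set x | forall i, i \in l -> P i x].
Proof.
move=> FF; elim: l => [|i l IH] Pl; first by apply: filterS filterT => x _ i.
apply: filterS (filterI (Pl i (mem_head i l)) (IH _)) => [x [Pix Plx] j|j jl].
  by rewrite inE => /predU1P[->|/Plx].
by apply: Pl; rewrite inE jl orbT.
Qed.

Lemma within_cvg_near_eq (X Y : topologicalType) (A B : set X) (f h : X -> Y)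
    (y : X) :
  (\forall z \near y, A z -> B z /\ f z = h z) -> f y = h y ->
  h @ within B (nbhs y) --> h y -> f @ within A (nbhs y) --> f y.
Proof.
move=> fh fhy hB M; rewrite fhy => /hB; rewrite /within /= !nbhs_simpl => BM.
apply: filterS (filterI fh BM) => z [fhz BMz] Az.
by have [Bz /= ->] := fhz Az; exact: BMz.
Qed.

Section CompactSeparation.
Variable T : topologicalType.

Lemma compact_directed_cover (Z : set T) (S : set (set T)) :
  compact Z -> (forall N, S N -> open N) -> S !=set0 ->
  (forall N M, S N -> S M -> S (N `|` M)) ->
  (forall z, Z z -> exists2 N, S N & N z) -> exists2 N, S N & Z `<=` N.
Proof.
move=> cZ oS [N0 SN0] SU cov; apply: contrapT => noN.
pose G := filter_from S (fun N => Z `\` N).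
have GF : ProperFilter G.
  apply: filter_from_proper => [|N SN].
    apply: filter_from_filter; first by exists N0.
    move=> N M SN SM; exists (N `|` M); first exact: SU.
    by move=> z [Zz /not_orP[]].
  apply: contrapT => /forallNP ZN; apply: noN; exists N => // z Zz.
  by apply: contrapT => Nz; apply: (ZN z).
have [z [Zz clz]] : Z `&` cluster G !=set0 by apply: cZ => //; exists N0.
have [N SN Nz] := cov z Zz.
have GZN : G (Z `\` N) by exists N.
have nN : nbhs z N by apply: open_nbhs_nbhs; split => //; exact: oS.
by have [w [[_ nNw] Nw]] := clz _ _ GZN nN.
Qed.

Lemma compact_finite_subcover (Z : set T) (O : T -> set T) : compact Z ->
  (forall z, Z z -> open (O z) /\ O z z) ->
  exists2 l : seq T, (forall z, z \in l -> Z z) &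
    Z `<=` \bigcup_(z in [set z | z \in l]) O z.
Proof.
move=> cZ oO.
have [_ [l [lZ ->]] Zl] : exists2 N, (exists l : seq T,
    (forall z, z \in l -> Z z) /\ N = \bigcup_(z in [set z | z \in l]) O z) &
    Z `<=` N.
  apply: compact_directed_cover => //.
  - by move=> _ [l [lZ ->]]; apply: bigcup_open => z /lZ /oO[].
  - by exists set0, [::]; split => //; apply/seteqP; split => // y [].
  - move=> _ _ [l1 [l1Z ->]] [l2 [l2Z ->]]; exists (l1 ++ l2); split.
      by move=> z; rewrite mem_cat => /orP[/l1Z|/l2Z].
    apply/seteqP; split => y.
      by move=> [] [z zl Oy]; exists z => //=; rewrite mem_cat zl ?orbT.
    by move=> [z /=]; rewrite mem_cat => /orP[] zl Oy; [left|right]; exists z.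
  - move=> z Zz; exists (\bigcup_(x in [set x | x \in [:: z]]) O x).
      by exists [:: z]; split => // x; rewrite inE => /eqP ->.
    by exists z; [rewrite /= inE | exact: (oO z Zz).2].
by exists l.
Qed.

Definition open_separated (A B : set T) := exists U V : set T,
  [/\ open U, open V, A `<=` U, B `<=` V & U `&` V = set0].

Lemma open_separatedC A B : open_separated A B -> open_separated B A.
Proof. by move=> [U [V [oU oV AU BV UV0]]]; exists V, U; rewrite setIC. Qed.

Lemma open_separated_compactl A B : compact A ->
  (forall a, A a -> open_separated [set a] B) -> open_separated A B.
Proof.
move=> cA sepA.
have [U [oU [V [oV BV UV0]]] AU] : exists2 U, (open U /\ exists V,
    [/\ open V, B `<=` V & U `&` V = set0]) & A `<=` U.
  apply: compact_directed_cover => //.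
  - by move=> U [].
  - exists set0; split; first exact: open0.
    by exists setT; rewrite set0I; split => //; exact: openT.
  - move=> U U' [oU [V [oV BV /disjoints_subset UV]]].
    move=> [oU' [V' [oV' BV' /disjoints_subset UV']]].
    split; first exact: openU.
    exists (V `&` V'); split; first exact: openI.
      by move=> b Bb; split; [exact: BV | exact: BV'].
    by apply/disjoints_subset => z [/UV|/UV'] nV [].
  - move=> a Aa; have [U [V [oU oV aU BV UV0]]] := sepA a Aa.
    by exists U; [split => //; exists V | exact: aU].
by exists U, V.
Qed.

Lemma hausdorff_open_separated1 (x y : T) : hausdorff_space T -> x != y ->
  open_separated [set x] [set y].
Proof.
rewrite open_hausdorff => /[apply] -[[U V]]; rewrite /= !inE => -[Ux Vy].
move=> [oU oV UV0]; exists U, V.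
by split => // _ ->.
Qed.

Lemma compact_open_separated A B : hausdorff_space T ->
  compact A -> compact B -> A `&` B = set0 -> open_separated A B.
Proof.
move=> hT cA cB AB0; apply: open_separated_compactl => // a Aa.
apply: open_separatedC; apply: open_separated_compactl => // b Bb.
apply: open_separatedC; apply: hausdorff_open_separated1 => //.
by apply/eqP => ab; rewrite -[False]/(set0 a) -AB0; split; rewrite // ab.
Qed.

End CompactSeparation.

Lemma closed_eq_fun (X Y : topologicalType) (f1 f2 : X -> Y) :
  hausdorff_space Y -> continuous f1 -> continuous f2 ->
  closed [set x | f1 x = f2 x].
Proof.
move=> hY c1 c2 x clx; apply: contrapT => /eqP ne.
have [U [V [oU oV Uf1 Vf2 UV0]]] := hausdorff_open_separated1 hY ne.
have nUV : nbhs x (f1 @^-1` U `&` f2 @^-1` V).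
  by apply: filterI; [apply: c1 | apply: c2]; apply: open_nbhs_nbhs; split;
    [exact: oU | exact: Uf1 | exact: oV | exact: Vf2].
have [z [/= f12z [Uz Vz]]] := clx _ nUV.
by rewrite -[False]/(set0 (f1 z)) -UV0; split; rewrite // f12z.
Qed.

Definition rel_clopen (T : topologicalType) (Y D : set T) :=
  [/\ D `<=` Y, closed D & closed (Y `\` D)].

Definition quasi_component (T : topologicalType) (Y : set T) (x : T) :=
  \bigcap_(D in [set D | rel_clopen Y D /\ D x]) D.

Section QuasiComponent.
Variables (T : topologicalType) (Y : set T) (x : T).
Hypotheses (hT : hausdorff_space T) (cY : compact Y) (Yx : Y x).

Let clY : closed Y := compact_closed hT cY.

Lemma rel_clopenI D1 D2 :
  rel_clopen Y D1 -> rel_clopen Y D2 -> rel_clopen Y (D1 `&` D2).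
Proof.
move=> [D1Y cD1 cYD1] [_ cD2 cYD2]; split; first by move=> z [/D1Y].
  exact: closedI.
by rewrite setDIr; exact: closedU.
Qed.

Lemma rel_clopen_refl : rel_clopen Y Y.
Proof. by split => //; rewrite setDv; exact: closed0. Qed.

Lemma quasi_component_sub : quasi_component Y x `<=` Y.
Proof. by move=> z; apply; split => //; exact: rel_clopen_refl. Qed.

Lemma quasi_component_closed : closed (quasi_component Y x).
Proof. by apply: closed_bigI => D [[]]. Qed.

Lemma rel_clopen_avoid (Z : set T) : compact Z ->
  Z `<=` ~` quasi_component Y x ->
  exists D, [/\ rel_clopen Y D, D x & Z `<=` ~` D].
Proof.
move=> cZ ZQ.
have [_ [D [rD Dx ->]] ZD] : exists2 N,
    (exists D, [/\ rel_clopen Y D, D x & N = ~` D]) & Z `<=` N.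
  apply: compact_directed_cover => //.
  - by move=> _ [D [[_ cD _] _ ->]]; exact: closed_openC.
  - by exists (~` Y), Y; split => //; exact: rel_clopen_refl.
  - move=> _ _ [D [rD Dx ->]] [D' [rD' D'x ->]].
    by exists (D `&` D'); split; [exact: rel_clopenI | | rewrite setCI].
  - move=> z /ZQ /existsNP[D /not_implyP[[rD Dx] nDz]].
    by exists (~` D) => //; exists D.
by exists D.
Qed.

(* Separate P and Q \ P by disjoint open sets U1, U2; a relatively clopen
   D0 around x missing the compact set Y \ (U1 ∪ U2) makes D0 \ U2 relatively
   clopen, and it contains Q but misses Q \ P. *)
Lemma quasi_component_clopen_split (P : set T) :
  P `<=` quasi_component Y x -> closed P ->
  closed (quasi_component Y x `\` P) -> P x -> quasi_component Y x `<=` P.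
Proof.
set Q := quasi_component Y x => PQ cP cQP Px.
have cptQ (A : set T) : closed A -> A `<=` Q -> compact A.
  move=> cA AQ; apply: (subclosed_compact cA cY).
  exact: subset_trans AQ quasi_component_sub.
have [U1 [U2 [oU1 oU2 PU1 QPU2 U12]]] : open_separated P (Q `\` P).
  apply: compact_open_separated => //; [exact: cptQ | | exact: setDIK].
  by apply: cptQ => // z [].
have ZQ : Y `\` (U1 `|` U2) `<=` ~` Q.
  move=> z [_ nU12z] Qz; apply: nU12z.
  by have [/PU1|nPz] := pselect (P z); [left | right; exact: QPU2].
have [D0 [[D0Y cD0 cYD0] D0x ZD0]] :=
  rel_clopen_avoid (compact_closedI cY (open_closedC (openU oU1 oU2))) ZQ.
have U1nU2 z : U1 z -> ~ U2 z by move=> U1z U2z; rewrite -[False]/(set0 z) -U12.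
have rD : rel_clopen Y (D0 `\` U2).
  split; first by move=> z [/D0Y].
    exact: closedI cD0 (open_closedC oU2).
  have -> : Y `\` (D0 `\` U2) = (Y `\` D0) `|` (D0 `\` U1).
    apply/seteqP; split => z /=.
      move=> [Yz /not_andP[nD0z|/contrapT U2z]]; first by left.
      have [D0z|] := pselect (D0 z); last by left.
      by right; split => // /U1nU2.
    move=> [[Yz nD0z]|[D0z nU1z]]; first by split => // -[].
    split; first exact: D0Y.
    move=> [_ nU2z]; apply: (ZD0 z) => //; split; first exact: D0Y.
    by move=> [].
  exact: closedU cYD0 (closedI cD0 (open_closedC oU1)).
move=> z Qz; apply: contrapT => nPz.
have [_] : (D0 `\` U2) z.
  by apply: Qz; split => //; split => // /(U1nU2 x (PU1 x Px)).
by apply; exact: QPU2.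
Qed.

Lemma quasi_component_connected : connected (quasi_component Y x).
Proof.
set Q := quasi_component Y x => B [b Bb] [C oC BQC] [C' cC' BQC'].
have BQ : B `<=` Q by rewrite BQC => z [].
have cB : closed B by rewrite BQC'; exact: closedI quasi_component_closed cC'.
have cQB : closed (Q `\` B).
  rewrite BQC setDIr setDv set0U.
  exact: closedI quasi_component_closed (open_closedC oC).
have [Bx|nBx] := pselect (B x).
  by apply/seteqP; split => //; exact: quasi_component_clopen_split.
have QQB : Q `<=` Q `\` B.
  apply: quasi_component_clopen_split => //.
  - by rewrite -/Q setDD (setIidr BQ).
  - by split => // D [].
by have [] := QQB b (BQ b Bb).
Qed.

End QuasiComponent.

Section ClopenBase.
Variable T : topologicalType.
Hypotheses (hT : hausdorff_space T) (lcT : locally_compact [set: T])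
  (tdT : totally_disconnected [set: T]).

Lemma clopen_nbhs_subset (x : T) (W : set T) : open W -> W x ->
  exists C, [/\ clopen C, C x & C `<=` W].
Proof.
move=> oW Wx; have [Y nY [cY _]] := lcT (I : [set: T] x).
rewrite withinET in nY.
have Yx : Y x := nbhs_singleton nY.
pose O := Y° `&` W.
have oO : open O by apply: openI => //; exact: open_interior.
have Qx : quasi_component Y x `<=` [set x].
  rewrite -(tdT (I : [set: T] x)); apply: connected_component_max => //.
    by move=> D [].
  exact: quasi_component_connected.
have YOQ : Y `\` O `<=` ~` quasi_component Y x.
  move=> z [_ nOz] /Qx zx; apply: nOz; rewrite zx.
  by split => //; exact: nbhs_singleton.
have [D [[DY cD cYD] Dx YOD]] :=
  rel_clopen_avoid hT cY Yx (compact_closedI cY (open_closedC oO)) YOQ.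
have DO : D `<=` O.
  move=> z Dz; apply: contrapT => nOz; apply: (YOD z) => //.
  by split => //; exact: DY.
exists D; split => //; last by move=> z /DO[].
split => //; have -> : D = O `&` ~` (Y `\` D).
  apply/seteqP; split => z; first by move=> Dz; split; [exact: DO | move=> []].
  move=> [[/interior_subset Yz _] nYDz]; apply: contrapT => nDz.
  exact: nYDz (conj Yz nDz).
by apply: openI => //; exact: closed_openC.
Qed.

Lemma clopen_nbhs_subset_seq (s : seq T) (W : set T) : open W ->
  (forall p, p \in s -> W p) ->
  exists C, [/\ clopen C, forall p, p \in s -> C p & C `<=` W].
Proof.
move=> oW; elim: s => [|p s IH] sW.
  by exists set0; split => //; exact: clopen0.
have [C [clC sC CW]] :
    exists C, [/\ clopen C, forall p, p \in s -> C p & C `<=` W].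
  by apply: IH => q qs; apply: sW; rewrite inE qs orbT.
have [D [clD Dp DW]] := clopen_nbhs_subset oW (sW p (mem_head p s)).
exists (D `|` C); split; [exact: clopenU | | by move=> q [/DW|/CW]].
by move=> q; rewrite inE => /predU1P[->|/sC]; [left|right].
Qed.

End ClopenBase.

Section FirstCover.
Variables (X : Type) (I : eqType) (l : seq I) (A : I -> set X).

Definition first_cover (y : X) : option I := ohead [seq i <- l | `[< A i y >]].

Lemma first_coverP y i : first_cover y = Some i -> i \in l /\ A i y.
Proof.
rewrite /first_cover; case E: [seq _ <- l | _] => [|j r] //= [<-].
have : j \in [seq i <- l | `[< A i y >]] by rewrite E mem_head.
by rewrite mem_filter => /andP[/asboolP].
Qed.

Lemma first_coverPn y : first_cover y = None -> forall i, i \in l -> ~ A i y.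
Proof.
rewrite /first_cover; case E: [seq _ <- l | _] => [|j r] //= _ i il Aiy.
have : i \in [seq i <- l | `[< A i y >]].
  by rewrite mem_filter il andbT; apply/asboolP.
by rewrite E.
Qed.

Lemma eq_first_cover y y' : (forall i, i \in l -> (A i y' <-> A i y)) ->
  first_cover y' = first_cover y.
Proof.
move=> AE; congr ohead; apply: eq_in_filter => i il.
exact: asbool_equiv_eq (AE i il).
Qed.

End FirstCover.

Lemma first_cover_near (X : topologicalType) (I : eqType) (l : seq I)
    (A : I -> set X) (y : X) :
  (forall i, i \in l -> clopen (A i)) ->
  \forall y' \near y, first_cover l A y' = first_cover l A y.
Proof.
move=> clA; apply: filterS (@eq_first_cover _ _ l A y) _.
apply: filter_forall_seq => i /clA[oA cA].
have [Ay|nAy] := pselect (A i y).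
  by apply: filterS (open_nbhs_nbhs (conj oA Ay)) => y' Ay'; split.
apply: filterS (open_nbhs_nbhs (conj (closed_openC cA) nAy)) => y' nAy'.
by split.
Qed.

Lemma sopp_sz (T E : topologicalType) (F : ab_sheaf T E) t :
  sopp F (sz F t) = sz F t.
Proof.
have zN := saddN F (sz F t); rewrite sp_sz in zN.
have Nz := sadd0 F (sopp F (sz F t)); rewrite sp_sopp sp_sz in Nz.
by rewrite -[LHS]Nz saddC ?zN // sp_sopp.
Qed.

Section FibrePower.
Variables (T T0 : topologicalType) (g : T0 -> T) (n : nat).
Hypotheses (hT : hausdorff_space T) (cg : continuous g).
Local Notation Pn := (Pn T0 n).

Definition cube (C : set T0) : set Pn := [set y | forall i, C (y i)].

Lemma coord_continuous (i : 'I_n.+1) : continuous (fun y : Pn => y i).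
Proof. exact: (@proj_continuous _ (fun _ : 'I_n.+1 => T0) i). Qed.

Lemma clopen_cube C : clopen C -> clopen (cube C).
Proof.
move=> [oC cC]; split.
  rewrite openE => y Cy.
  apply: (@filter_forall Pn 'I_n.+1 (fun i z => C (z i)) (nbhs y) _) => i.
  by apply: (@coord_continuous i y); exact: open_nbhs_nbhs.
have -> : cube C =
    \bigcap_(i in [set: 'I_n.+1]) ((fun y : Pn => y i) @^-1` C).
  by apply/seteqP; split => y /= Cy i => [_|]; exact: Cy.
apply: closed_bigI => i _; apply: preimage_closed => // y _.
exact: coord_continuous.
Qed.

Lemma compact_cube C : compact C -> compact (cube C).
Proof.
by move=> cC; exact: (@tychonoff _ (fun _ : 'I_n.+1 => T0) (fun _ => C)).
Qed.

Lemma coord_g_continuous (i : 'I_n.+1) : continuous (fun y : Pn => g (y i)).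
Proof.
by move=> y; apply: continuous_comp; [exact: coord_continuous | exact: cg].
Qed.

Lemma gn_continuous : continuous (@gn T T0 g n).
Proof. exact: coord_g_continuous. Qed.

Lemma Tn_gn (y : Pn) : Tn g y -> forall i, g (y i) = gn g y.
Proof. by move=> Ty i; exact: Ty. Qed.

Lemma Tn_closed : closed (@Tn T T0 g n).
Proof.
have -> : @Tn T T0 g n = \bigcap_(ij in [set: 'I_n.+1 * 'I_n.+1])
    [set y : Pn | g (y ij.1) = g (y ij.2)].
  apply/seteqP; split => y /= Ty; first by move=> [i j] _; exact: Ty.
  by move=> i j; exact: (Ty (i, j)).
apply: closed_bigI => -[i j] _.
by apply: closed_eq_fun => //; exact: coord_g_continuous.
Qed.

Hypothesis pg : forall K, compact K -> compact (g @^-1` K).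

Lemma compact_Wn K : compact K -> compact (Wn g (n := n) K).
Proof.
move=> cK; apply: (@subclosed_compact _ _ (cube (g @^-1` K))).
- apply: closedI Tn_closed _; apply: preimage_closed (compact_closed hT cK).
  by move=> y _; exact: gn_continuous.
- exact/compact_cube/pg.
- by move=> y [Ty Ky] i /=; rewrite Tn_gn.
Qed.

Hypothesis lcT : locally_compact [set: T].

(* The tube lemma for the proper map g_n restricted to T_n. *)
Lemma near_fibres_sub (O : set Pn) (t : T) :
  open O -> Wn g [set t] `<=` O -> \forall t' \near t, Wn g [set t'] `<=` O.
Proof.
move=> oO tO; have [Y nY [cY _]] := lcT (I : [set: T] t).
rewrite withinET in nY.
set Q := Wn g Y `\` O.
have cQ : compact Q := compact_closedI (compact_Wn cY) (open_closedC oO).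
have ngQ : nbhs t (~` (@gn _ _ g n @` Q)).
  apply: open_nbhs_nbhs; split.
    apply/closed_openC/(compact_closed hT)/continuous_compact => //.
    exact/continuous_subspaceT/gn_continuous.
  by move=> [y [[Ty _] nOy] gyt]; apply/nOy/tO.
apply: filterS (filterI nY ngQ) => t' [Yt' nQt'] y [Ty gyt'].
apply: contrapT => nOy; apply: nQt'; exists y => //.
by split => //; split => //; rewrite /= gyt'.
Qed.

Lemma germ_eqP (E : topologicalType) (U1 U2 : set T) t (s1 s2 : Pn -> E) :
  germ_eq g U1 U2 t s1 s2 <->
  \forall t' \near t,
    (U1 `&` U2) t' /\ Wn g [set t'] `<=` [set y | s1 y = s2 y].
Proof.
split.
  move=> [V [oV Vt VU sV]]; apply: filterS (open_nbhs_nbhs (conj oV Vt)).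
  move=> t' Vt'; split; first exact: VU.
  by move=> y [Ty gyt']; apply: sV; split; rewrite //= gyt'.
rewrite /prop_near1 nbhsE => -[V [oV Vt] VP]; exists V; split => //.
  by move=> t' /VP[].
by move=> y [Ty Vy]; have [_] := VP _ Vy; apply; split.
Qed.

End FibrePower.

Section Gluing.
Variables (T T0 E : topologicalType) (g : T0 -> T) (F : ab_sheaf T E).
Variable n : nat.
Local Notation Pn := (Pn T0 n).
Local Notation cube := (@cube T0 n).
Variables (K : set T) (U : T -> set T) (s : T -> Pn -> E).
Hypothesis sK : sec_Fna_on g F K U s.
Variables (l : seq Pn) (C : Pn -> set T0).
Hypotheses (lK : forall x, x \in l -> Wn g K x)
  (clopen_C : forall x, x \in l -> clopen (C x))
  (C_U : forall x, x \in l -> C x `<=` g @^-1` U (gn g x)).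
Hypothesis cg : continuous g.

Local Notation pick := (first_cover l (fun x => cube (C x))).
Local Notation cubes := (\bigcup_(x in [set x | x \in l]) cube (C x)).
Local Notation zero_section := (fun y : Pn => sz F (gn g y)).

Definition glued_section (y : Pn) : E :=
  if pick y is Some x then s (gn g x) y else zero_section y.

Lemma pick_sec (y x : Pn) : Tn g y -> pick y = Some x ->
  [/\ x \in l, Wn g (U (gn g x)) y & sec_Fna g F (U (gn g x)) (s (gn g x))].
Proof.
move=> Ty pick_y; have [xl Cy] := first_coverP pick_y; have [_ Kx] := lK xl.
have [_ _ sx] := sK.1 _ Kx.
by split => //; split => //; exact: C_U xl _ (Cy ord0).
Qed.

Lemma glued_continuous : {within Wn g (n := n) setT, continuous glued_section}.
Proof.
apply/subspace_continuousP => y [Ty _].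
have pick_near : \forall z \near y, pick z = pick y.
  by apply: first_cover_near => x /clopen_C; exact: clopen_cube.
rewrite {2}/glued_section; case py: (pick y) => [x|].
  have [_ Wy [[_ /subspace_continuousP cs] _ _]] := pick_sec Ty py.
  apply: (@within_cvg_near_eq _ _ _ (Wn g (U (gn g x))) _ (s (gn g x))).
  - apply: filterS pick_near => z zy [Tz _]; rewrite py in zy.
    have [_ Wz _] := pick_sec Tz zy.
    by split => //; rewrite /from_subspace /glued_section zy.
  - by rewrite /from_subspace /glued_section py.
  - exact: cs Wy.
have cz : {within Wn g (n := n) setT, continuous zero_section}.
  apply: continuous_subspaceT => z.
  apply: continuous_comp; [exact: (gn_continuous cg) | exact: sz_cont].
apply: (@within_cvg_near_eq _ _ _ (Wn g setT) _ zero_section).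
- apply: filterS pick_near => z zy Wz; rewrite py in zy.
  by split => //; rewrite /from_subspace /glued_section zy.
- by rewrite /from_subspace /glued_section py.
- by move/subspace_continuousP: cz; apply.
Qed.

Lemma glued_alternating (pi : 'S_n.+1) (y : Pn) : Tn g y ->
  glued_section (fun i => y (pi i)) =
  if odd_perm pi then sopp F (glued_section y) else glued_section y.
Proof.
move=> Ty; have pick_perm : pick (fun i => y (pi i)) = pick y.
  apply: eq_first_cover => x _; split => Cy i; last exact: Cy.
  by have := Cy (pi^-1 i)%g; rewrite permKV.
rewrite /glued_section pick_perm; case py: (pick y) => [x|].
  by have [_ Wy [_ _ alt]] := pick_sec Ty py; exact: alt.
have -> : gn g (fun i => y (pi i)) = gn g y by exact: Ty.
by case: odd_perm; rewrite ?sopp_sz.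
Qed.

Lemma sec_Fna_glued : sec_Fna g F setT glued_section.
Proof.
split; [split; last exact: glued_continuous | | ].
- move=> y [Ty _]; rewrite /glued_section; case py: (pick y) => [x|].
    by have [_ Wy [[sp_s _] _ _]] := pick_sec Ty py; exact: sp_s.
  exact: sp_sz.
- move=> y [Ty _]; rewrite /glued_section; case py: (pick y) => [x|] // nz.
  by have [_ Wy [_ supp _]] := pick_sec Ty py; exact: supp.
- by move=> pi y [Ty _]; exact: glued_alternating.
Qed.

Hypotheses (hT : hausdorff_space T) (lcT : locally_compact [set: T]).
Hypothesis pg : forall K, compact K -> compact (g @^-1` K).
Hypothesis Kcov : Wn g (n := n) K `<=` cubes.

Lemma near_germ_cube t1 t (x : Pn) : K t1 -> K t -> U t1 t -> x \in l ->
  \forall t' \near t,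
    Wn g [set t'] `&` cube (C x) `<=` [set y | s (gn g x) y = s t1 y].
Proof.
move=> Kt1 Kt Ut1t xl.
have [[y [[Ty gyt] Cy]]|nyt] :=
  pselect (exists y : Pn, (Wn g [set t] `&` cube (C x)) y).
  have Uxt : U (gn g x) t by rewrite -gyt; exact: C_U xl _ (Cy ord0).
  have /germ_eqP := sK.2 (gn g x) t1 t (lK xl).2 Kt1 Kt Uxt Ut1t.
  by apply: filterS => t' [_ st'] z [/st'].
have fibre_off : Wn g (n := n) [set t] `<=` ~` cube (C x).
  by move=> z Wz Cz; apply: nyt; exists z.
have [_ /closed_openC ocC] := clopen_cube n (clopen_C xl).
have := near_fibres_sub hT cg pg lcT ocC fibre_off.
by apply: filterS => t' tC z [/tC].
Qed.

Lemma glued_germ_eq t1 t : K t1 -> K t -> U t1 t ->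
  germ_eq g setT (U t1) t glued_section (s t1).
Proof.
move=> Kt1 Kt Ut1t; apply/germ_eqP.
have [oU1 _ _] := sK.1 t1 Kt1.
have oA : open cubes.
  by apply: bigcup_open => x /clopen_C /(clopen_cube n)[].
have fibre_cover : Wn g (n := n) [set t] `<=` cubes.
  by move=> y [Ty gyt]; apply: Kcov; split; rewrite // gyt.
have near_cover := near_fibres_sub hT cg pg lcT oA fibre_cover.
have near_agree := filter_forall_seq (nbhs_filter t)
  (fun x xl => near_germ_cube Kt1 Kt Ut1t xl).
apply: filterS (filterI (filterI (open_nbhs_nbhs (conj oU1 Ut1t)) near_cover)
  near_agree) => t' [[Ut1t' cover] agree].
split => // y Wy /=; have [x xl Cy] := cover y Wy.
rewrite /glued_section; case py: (pick y) => [x'|]; last first.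
  by have := first_coverPn py xl Cy.
have [x'l Cx'y] := first_coverP py.
exact: agree x' x'l y (conj Wy Cx'y).
Qed.

End Gluing.

Lemma adapted_cube_cover (T T0 : topologicalType) (g : T0 -> T) (n : nat)
    (K : set T) (U : T -> set T) :
  hausdorff_space T0 -> locally_compact [set: T0] ->
  totally_disconnected [set: T0] ->
  hausdorff_space T -> continuous g ->
  (forall K, compact K -> compact (g @^-1` K)) ->
  compact K -> (forall t, K t -> open (U t) /\ U t t) ->
  exists (l : seq (Pn T0 n)) (C : Pn T0 n -> set T0),
    [/\ forall x, x \in l -> Wn g K x,
        forall x, x \in l -> clopen (C x),
        forall x, x \in l -> C x `<=` g @^-1` U (gn g x) &
        Wn g (n := n) K `<=` \bigcup_(x in [set x | x \in l]) cube (C x)].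
Proof.
move=> hT0 lcT0 tdT0 hT cg pg cK oU.
have cube_at (x : Pn T0 n) : exists D : set T0, Wn g K x ->
    [/\ clopen D, forall i, D (x i) & D `<=` g @^-1` U (gn g x)].
  have [[Tx Kx]|nKx] := pselect (Tn g x /\ K (gn g x)); last first.
    by exists set0 => Kx; case: nKx.
  have [oUx Ut] := oU _ Kx.
  have oW : open (g @^-1` U (gn g x)) by apply: open_comp => // p _; exact: cg.
  have xW p : p \in codom x -> (g @^-1` U (gn g x)) p.
    by move=> /codomP[i ->]; rewrite /= (Tn_gn Tx).
  have [D [clD xD DW]] := clopen_nbhs_subset_seq hT0 lcT0 tdT0 oW xW.
  by exists D => _; split => // i; apply: xD; exact: codom_f.
have [C HC] := choice cube_at.
have cube_nbhs x : Wn g K x -> open (cube (n := n) (C x)) /\ cube (C x) x.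
  by move=> /HC[/(clopen_cube n)[oC _] Cx _].
have [l lK Kl] := compact_finite_subcover (compact_Wn hT cg pg cK) cube_nbhs.
exists l, C; split => // x /lK /HC[]//.
Qed.

Theorem proposition2p10
  (T Gm T0 E : topologicalType) (G : etale_groupoid T Gm)
  (g : T0 -> T) (act0 : Gm -> T0 -> T0) (N : nat)
  (F : ab_sheaf T E) (actE : Gm -> E -> E) (n : nat) :
  slch T -> slch Gm -> slch T0 ->
  is_Gspace G g act0 ->
  totally_disconnected [set: T0] ->
  proper_map g -> fibres_atmost g N ->
  is_Gsheaf G F actE ->
  Fna_csoft g F n.
Proof.
move=> [hT lcT _] _ [hT0 lcT0 _] _ tdT0 [cg pg] _ _ K U s cK sK.
have oU t : K t -> open (U t) /\ U t t by move=> /sK.1[].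
have [l [C [lK clC CU Kcov]]] :=
  adapted_cube_cover n hT0 lcT0 tdT0 hT cg pg cK oU.
exists (glued_section g F s l C); split.
  exact (sec_Fna_glued sK lK clC CU cg).
move=> t1 t Kt1 Kt Ut1t.
exact (glued_germ_eq sK lK clC CU cg hT lcT pg Kcov Kt1 Kt Ut1t).
Qed.
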